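(* Let $\mathcal{H}$ be any $4$-uniform directed hypergraph on $\{1,2,3\}$ and consider any network dynamical system on $\mathcal{H}$ with smooth $F$ and coupling homogeneous in each order. Then its vector field is not equal to the Guckenheimer--Holmes vector field $$\dot x_1 = x_1 + a x_1^3 + b x_1x_2^2 + c x_1x_3^2,\quad \dot x_2 = x_2 + a x_2^3 + b x_2x_3^2 + c x_1^2x_2,\quad \dot x_3 = x_3 + a x_3^3 + b x_1^2x_3 + c x_2^2x_3$$ for any real $a,b,c$ with $b\neq c$; in particular the Guckenheimer--Holmes system with $a+b+c=-1$, $-\tfrac13<a<0$, $c<a<b<0$ cannot be realized.
   Context: A directed hypergraph on $\mathcal{V}=\{1,\dots,N\}$ is a set $\mathcal{E}$ of hyperedges $e=(T(e),H(e))$ with nonempty tail and head; the order of $e$ is $|T(e)|+1$; $\mathcal H$ is $m$-uniform if all hyperedges have order $m$ (for three vertices and $m=4$ this means $T(e)=\{1,2,3\}$ for every $e$). A network dynamical system with coupling homogeneous in each order is $\dot x_k = F(x_k) + \sum_{e\in\mathcal{E}:\,k\in H(e)} G^{(|e|)}(x_k; x_{T(e)})$ on $\mathbb{R}^N$, with $G^{(m)}:\mathbb{R}\times\mathbb{R}^{m-1}\to\mathbb{R}$ smooth, symmetric in its last $m-1$ arguments and depending nontrivially on them. *)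

From mathcomp Require Import all_boot all_order all_algebra.
From mathcomp Require Import all_classical all_reals all_analysis.
Set Implicit Arguments. Unset Strict Implicit. Unset Printing Implicit Defensive.
Import Order.TTheory GRing.Theory Num.Theory.
Import numFieldNormedType.Exports.
Local Open Scope ring_scope.

(* Iterated partial derivatives of f : R^n -> R along the coordinate
   directions listed in l (the head of the list is applied last). *)
Fixpoint iterD (R : realType) (n : nat) (l : seq 'I_n) (f : 'rV[R]_n -> R)
  : 'rV[R]_n -> R :=
  if l is i :: l' then fun x => derive (iterD l' f) x (delta_mx 0 i) else f.

Definition smooth (R : realType) (n : nat) (f : 'rV[R]_n -> R) : Prop :=
  forall l : seq 'I_n,
    continuous (iterD l f) /\
    forall (i : 'I_n) (x : 'rV[R]_n), derivable (iterD l f) x (delta_mx 0 i).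

Definition smooth1 (R : realType) (F : R -> R) : Prop :=
  smooth (fun v : 'rV[R]_1 => F (v 0 0)).

Definition smooth4 (R : realType) (G : R -> R -> R -> R -> R) : Prop :=
  smooth (fun v : 'rV[R]_4 =>
            G (v 0 0) (v 0 (inord 1)) (v 0 (inord 2)) (v 0 (inord 3))).

(* Coupling function of order 4: G(x_k; y1, y2, y3), symmetric in its last
   three arguments and depending nontrivially on them. *)
Definition sym_last3 (R : realType) (G : R -> R -> R -> R -> R) : Prop :=
  forall y a b c, G y a b c = G y b a c /\ G y a b c = G y a c b.

Definition nontrivial_last3 (R : realType) (G : R -> R -> R -> R -> R) : Prop :=
  exists y a b c a' b' c', G y a b c <> G y a' b' c'.

(* Directed hypergraph on {1,2,3} (vertices 'I_3 = {0,1,2}):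
   a set of hyperedges e = (T(e), H(e)) with nonempty tail and head. *)
Definition hyperedge3 := ({set 'I_3} * {set 'I_3})%type.

Definition is_dir_hypergraph3 (E : {set hyperedge3}) : Prop :=
  forall e, e \in E -> e.1 != finset.set0 /\ e.2 != finset.set0.

Definition order3 (e : hyperedge3) : nat := #|e.1|.+1.

Definition uniform3 (m : nat) (E : {set hyperedge3}) : Prop :=
  forall e, e \in E -> order3 e = m.

(* Vector field of the network dynamical system on a 4-uniform hypergraph on
   {1,2,3}: every tail is {1,2,3}, so x_{T(e)} = (x_1, x_2, x_3). *)
Definition nds_field (R : realType) (E : {set hyperedge3}) (F : R -> R)
  (G4 : R -> R -> R -> R -> R) (x : 'I_3 -> R) (k : 'I_3) : R :=
  F (x k) + \sum_(e in E | k \in e.2)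
              G4 (x k) (x (inord 0)) (x (inord 1)) (x (inord 2)).

Definition GH_field (R : realType) (a b c : R) (x : 'I_3 -> R) (k : 'I_3) : R :=
  let x1 := x (inord 0) in let x2 := x (inord 1) in let x3 := x (inord 2) in
  match val k with
  | 0 => x1 + a * x1 ^+ 3 + b * x1 * x2 ^+ 2 + c * x1 * x3 ^+ 2
  | 1 => x2 + a * x2 ^+ 3 + b * x2 * x3 ^+ 2 + c * x1 ^+ 2 * x2
  | _ => x3 + a * x3 ^+ 3 + b * x1 ^+ 2 * x3 + c * x2 ^+ 2 * x3
  end.

From mathcomp Require Import all_boot all_order all_algebra.
From mathcomp Require Import all_classical all_reals all_analysis.
From mathcomp Require Import ring.
Import Order.TTheory GRing.Theory Num.Theory.
Local Open Scope ring_scope.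

(* On a 4-uniform hypergraph on three vertices every tail is
   {1,2,3}, so every coupling term G4(x_k; x_1, x_2, x_3) is invariant under
   permutations of (x_1, x_2, x_3).  Exchanging x_2 and x_3 fixes vertex 1,
   hence leaves the first component of any such network vector field
   unchanged.  The first Guckenheimer--Holmes component, on the other hand,
   changes by (c - b) x_1 (x_2^2 - x_3^2) under this exchange.  So a network
   realization of the Guckenheimer--Holmes field forces b = c, which
   contradicts both b != c and the strict chain c < a < b. *)

Definition swap23 {R : Type} (x : 'I_3 -> R) : 'I_3 -> R :=
  fun i => match val i with
           | 1 => x (inord 2)
           | 2 => x (inord 1)
           | _ => x i
           end.

Lemma val_inord3 (j : nat) : (j < 3)%N -> val (inord j : 'I_3) = j.
Proof. exact: inordK. Qed.

Lemma swap23E {R : Type} (x : 'I_3 -> R) :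
  [/\ swap23 x (inord 0) = x (inord 0),
      swap23 x (inord 1) = x (inord 2) &
      swap23 x (inord 2) = x (inord 1)].
Proof. by rewrite /swap23 !val_inord3. Qed.

Lemma nds_field_swap23 {R : realType} (E : {set hyperedge3}) (F : R -> R)
    (G4 : R -> R -> R -> R -> R) (x : 'I_3 -> R) :
  sym_last3 G4 -> nds_field E F G4 (swap23 x) (inord 0) =
                  nds_field E F G4 x (inord 0).
Proof.
move=> Gsym; rewrite /nds_field; have [-> -> ->] := swap23E x.
congr (_ + _); apply: eq_bigr => e _.
by have [_ ->] := Gsym (x (inord 0)) (x (inord 0)) (x (inord 1)) (x (inord 2)).
Qed.

Lemma GH_field_swap23 {R : realType} (a b c : R) (x : 'I_3 -> R) :
  GH_field a b c (swap23 x) (inord 0) - GH_field a b c x (inord 0) =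
  (c - b) * x (inord 0) * (x (inord 1) ^+ 2 - x (inord 2) ^+ 2).
Proof.
rewrite /GH_field; have [-> -> ->] := swap23E x.
by rewrite val_inord3 //=; ring.
Qed.

Lemma GH_realization_coeffs {R : realType} {E : {set hyperedge3}}
    {F : R -> R} {G4 : R -> R -> R -> R -> R} {a b c : R} :
  sym_last3 G4 ->
  (forall (x : 'I_3 -> R) (k : 'I_3), nds_field E F G4 x k = GH_field a b c x k) ->
  b = c.
Proof.
move=> Gsym realizes.
pose x : 'I_3 -> R := fun i => if val i == 2%N then 0 else 1.
have := GH_field_swap23 a b c x.
rewrite -!realizes nds_field_swap23 // subrr /x !val_inord3 //=.
by rewrite expr1n expr0n subr0 !mulr1 => /eqP; rewrite eq_sym subr_eq0 => /eqP.
Qed.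

Theorem mainTheorem9 (R : realType) (E : {set hyperedge3})
  (F : R -> R) (G4 : R -> R -> R -> R -> R) :
  is_dir_hypergraph3 E -> uniform3 4 E ->
  smooth1 F -> smooth4 G4 -> sym_last3 G4 -> nontrivial_last3 G4 ->
  (forall a b c : R, b != c ->
     ~ (forall (x : 'I_3 -> R) (k : 'I_3), nds_field E F G4 x k = GH_field a b c x k))
  /\
  (forall a b c : R, a + b + c = -1 -> - (3%:R)^-1 < a < 0 -> c < a -> a < b -> b < 0 ->
     ~ (forall (x : 'I_3 -> R) (k : 'I_3), nds_field E F G4 x k = GH_field a b c x k)).
Proof.
move=> _ _ _ _ Gsym _; split.
  by move=> a b c /eqP b_neq_c /(GH_realization_coeffs Gsym).
move=> a b c _ _ c_lt_a a_lt_b _ /(GH_realization_coeffs Gsym) b_eq_c.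
by move: (lt_trans c_lt_a a_lt_b); rewrite b_eq_c ltxx.
Qed.
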